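(* Let $\{G_i\}_{i\in I}$ be a family of profinite-$C$ groups. Then the cartesian product $\mathrm{Cr}_{i\in I}\,G_i$ (with the product topology) is a profinite-$C$ group. As a consequence, the inverse limit of any inverse system of profinite-$C$ groups (with continuous homomorphisms) is a profinite-$C$ group.
   Context: A permutable complement of a subgroup $H$ of a group $G$ is a subgroup $K$ with $G=HK$ and $H\cap K=1$. A profinite group $G$ is a profinite-$C$ group if every closed subgroup of $G$ has a closed permutable complement in $G$. $\mathrm{Cr}_{i\in I}\,G_i$ denotes the full cartesian product. *)

From HB Require Import structures.
From mathcomp Require Import all_boot all_order all_algebra.
From mathcomp Require Import all_classical all_reals all_analysis.
Set Implicit Arguments. Unset Strict Implicit. Unset Printing Implicit Defensive.
Import Order.TTheory.
Local Open Scope classical_set_scope.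

Definition topological_group (T : topologicalType)
  (mul : T -> T -> T) (inv : T -> T) (one : T) : Prop :=
  [/\ associative mul, left_id one mul, left_inverse one inv mul,
      continuous (fun p : T * T => mul p.1 p.2) & continuous inv].

Definition profinite_group (T : topologicalType)
  (mul : T -> T -> T) (inv : T -> T) (one : T) : Prop :=
  [/\ topological_group mul inv one, compact [set: T], hausdorff_space T
    & totally_disconnected [set: T]].

Definition is_subgroup (T : Type) (mul : T -> T -> T) (inv : T -> T) (one : T)
  (H : set T) : Prop :=
  [/\ H one, (forall x y, H x -> H y -> H (mul x y)) & (forall x, H x -> H (inv x))].

Definition permutable_complement (T : Type) (mul : T -> T -> T) (one : T)
  (H K : set T) : Prop :=
  (forall g, exists h k, [/\ H h, K k & g = mul h k]) /\ H `&` K = [set one].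

Definition profinite_C (T : topologicalType)
  (mul : T -> T -> T) (inv : T -> T) (one : T) : Prop :=
  profinite_group mul inv one /\
  forall H : set T, is_subgroup mul inv one H -> closed H ->
    exists K : set T, [/\ is_subgroup mul inv one K, closed K &
                          permutable_complement mul one H K].

Definition inv_limit {d : Order.disp_t} {I : porderType d}
  (G : I -> topologicalType)
  (f : forall i j : I, (i <= j)%O -> G j -> G i) : set (prod_topology G) :=
  [set x | forall (i j : I) (hij : (i <= j)%O), f i j hij (x j) = x i].

From HB Require Import structures.
From mathcomp Require Import all_boot all_order all_algebra.
From mathcomp Require Import all_classical all_reals all_analysis wochoice.
Local Open Scope classical_set_scope.

(* Well-order the index set I.  For a closed subgroup H of the product, let
   P_i (leading_coords i) be the set of i-th coordinates of those elements of H
   that are trivial at all indices below i.  As a continuous image of a compact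
   group, P_i is a closed subgroup of G_i, hence has a closed complement K_i,
   and the product K of the K_i is a complement of H.  A nontrivial element of
   H ∩ K would have its least nontrivial coordinate in some P_m ∩ K_m = 1.
   To write g = h k, the coordinates of a finite set of indices are corrected
   from the least one upwards, each time by an element of H that is trivial
   below the current index, and compactness of H passes from finite sets of
   indices to all of I.  The inverse limit is a closed subgroup of the
   product, and a closed subgroup L of a profinite-C group is profinite-C:
   if G = H K with H <= L, then L = H (K ∩ L). *)

Section GroupLaws.
Context {T : Type} {mul : T -> T -> T} {inv : T -> T} {one : T}.
Hypotheses (mulA : associative mul) (mul1g : left_id one mul)
  (mulVg : left_inverse one inv mul).

Lemma grp_mulKg x y : mul (inv x) (mul x y) = y.
Proof. by rewrite mulA mulVg mul1g. Qed.

Lemma grp_mulgI x y z : mul x y = mul x z -> y = z.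
Proof. by move=> e; rewrite -(grp_mulKg x y) e grp_mulKg. Qed.

Lemma grp_mulgV x : mul x (inv x) = one.
Proof.
rewrite -{1}(mul1g (mul x (inv x))) -{1}(mulVg (inv x)) -mulA.
by rewrite (grp_mulKg x (inv x)) mulVg.
Qed.

Lemma grp_mulg1 x : mul x one = x.
Proof. by rewrite -(mulVg x) mulA grp_mulgV mul1g. Qed.

Lemma grp_mulKVg x y : mul x (mul (inv x) y) = y.
Proof. by rewrite mulA grp_mulgV mul1g. Qed.

Lemma grp_invMg x y : inv (mul x y) = mul (inv y) (inv x).
Proof.
apply: (grp_mulgI (mul x y)).
by rewrite grp_mulgV -mulA (mulA y) grp_mulgV mul1g grp_mulgV.
Qed.

Lemma grp_invg1 : inv one = one.
Proof. by rewrite -{2}(mulVg one) grp_mulg1. Qed.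

End GroupLaws.

Section GroupMorphism.
Context {T U : Type} {mulT : T -> T -> T} {invT : T -> T} {oneT : T}.
Context {mulU : U -> U -> U} {invU : U -> U} {oneU : U}.
Hypotheses (mulAT : associative mulT) (mul1T : left_id oneT mulT)
  (mulVT : left_inverse oneT invT mulT).
Hypotheses (mulAU : associative mulU) (mul1U : left_id oneU mulU)
  (mulVU : left_inverse oneU invU mulU).
Context {f : T -> U}.
Hypothesis fM : {morph f : x y / mulT x y >-> mulU x y}.

Lemma grp_morph1 : f oneT = oneU.
Proof.
apply: (grp_mulgI mulAU mul1U mulVU (f oneT)).
by rewrite -fM mul1T (grp_mulg1 mulAU mul1U mulVU).
Qed.

Lemma grp_morphV : {morph f : x / invT x >-> invU x}.
Proof.
move=> x; apply: (grp_mulgI mulAU mul1U mulVU (f x)).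
rewrite (grp_mulgV mulAU mul1U mulVU) -fM (grp_mulgV mulAT mul1T mulVT).
exact: grp_morph1.
Qed.

End GroupMorphism.

Section Subgroups.
Context {T : Type} {mul : T -> T -> T} {inv : T -> T} {one : T}.

Lemma is_subgroupI {A B : set T} :
  is_subgroup mul inv one A -> is_subgroup mul inv one B ->
  is_subgroup mul inv one (A `&` B).
Proof.
move=> [A1 AM AV] [B1 BM BV].
by split=> [//|x y [Ax Bx] [Ay By]|x [Ax Bx]]; split; auto.
Qed.

Context {U : Type} {mulU : U -> U -> U} {invU : U -> U} {oneU : U} {f : T -> U}.
Hypotheses (fM : {morph f : x y / mul x y >-> mulU x y})
  (fV : {morph f : x / inv x >-> invU x}) (f1 : f one = oneU).

Lemma is_subgroup_image {A : set T} :
  is_subgroup mul inv one A -> is_subgroup mulU invU oneU (f @` A).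
Proof.
move=> [A1 AM AV]; split; first by exists one.
- by move=> _ _ [x Ax <-] [y Ay <-]; exists (mul x y); rewrite ?fM; auto.
- by move=> _ [x Ax <-]; exists (inv x); rewrite ?fV; auto.
Qed.

Lemma is_subgroup_preimage {B : set U} :
  is_subgroup mulU invU oneU B -> is_subgroup mul inv one (f @^-1` B).
Proof.
move=> [B1 BM BV]; split=> [|x y|x]; rewrite /preimage /= ?f1 ?fM ?fV; auto.
Qed.

End Subgroups.

Lemma fst_continuous {A B : topologicalType} : continuous (@fst A B).
Proof. by move=> [a b]; exact: cvg_fst. Qed.

Lemma snd_continuous {A B : topologicalType} : continuous (@snd A B).
Proof. by move=> [a b]; exact: cvg_snd. Qed.

Lemma continuous_comp2 {X A B C : topologicalType} {m : A -> B -> C}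
    {u : X -> A} {v : X -> B} :
  continuous (fun p : A * B => m p.1 p.2) -> continuous u -> continuous v ->
  continuous (fun x => m (u x) (v x)).
Proof.
move=> cm cu cv x.
by apply: continuous2_cvg; [exact: (cm (u x, v x))|exact: cu|exact: cv].
Qed.

Lemma continuous_prod_topology {X : topologicalType} {I : Type}
    {G : I -> topologicalType} {u : X -> prod_topology G} :
  (forall i, continuous (fun x => u x i)) -> continuous u.
Proof.
move=> cu x; apply/cvg_sup => i.
exact: (@continuous_comp_initial _ _ (G i) (fun g : prod_topology G => g i) u
  (cu i) x).
Qed.

Lemma closed_equalizer {X Y : topologicalType} {u v : X -> Y} :
  hausdorff_space Y -> continuous u -> continuous v ->
  closed [set x | u x = v x].
Proof.
rewrite open_hausdorff => T2 cu cv; rewrite -openC openE => x /= /eqP /T2.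
move=> [[A B] /= [uA vB] [oA oB /eqP AB0]].
rewrite inE in uA; rewrite inE in vB.
have nA : nbhs x (u @^-1` A) by apply: cu; exact: open_nbhs_nbhs.
have nB : nbhs x (v @^-1` B) by apply: cv; exact: open_nbhs_nbhs.
apply: filterS (filterI nA nB) => y [/= Auy Bvy] uvy.
suff : (A `&` B) (u y) by rewrite AB0.
by split; rewrite // uvy.
Qed.

Lemma compact_finite_intersection {T : topologicalType} {I : eqType}
    {C : set T} {E : I -> set T} :
  compact C -> (forall i, closed (E i)) ->
  (forall s : seq I, exists2 x, C x & forall i, i \in s -> E i x) ->
  exists2 x, C x & forall i, E i x.
Proof.
move=> cC cE fip.
pose B (s : seq I) := [set x | C x /\ forall i, i \in s -> E i x].
have BF : ProperFilter (filter_from setT B).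
  apply: filter_from_proper; last by move=> s _; have [x] := fip s; exists x.
  apply: filter_from_filter; first by exists [::].
  move=> s t _ _; exists (s ++ t) => // x [Cx Ex].
  by split; split=> // i si; apply: Ex; rewrite mem_cat si ?orbT.
have [|p [Cp clp]] := cC _ BF; first by exists [::] => // x [].
exists p => // i; apply: cE => U Up.
have [|x [[_ Ex] Ux]] := clp (B [:: i]) U _ Up; first by exists [:: i].
by exists x; split => //; apply: Ex; rewrite mem_seq1.
Qed.

Section SetType.
Context {X : topologicalType} {A : set X}.

Lemma set_val_inj : injective (@set_val X A).
Proof. by move=> x y; rewrite set_valE; exact: val_inj. Qed.

Lemma continuous_set_val : continuous (@set_val X A).
Proof. exact: initial_continuous. Qed.

Lemma compact_set_type : compact A -> compact [set: A].
Proof.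
move=> cA F PF _.
have FA : F (set_val @^-1` A) by apply: filterE => x; exact: set_valP.
have [p [Ap clp]] := cA _ (fmap_proper_filter set_val PF) FA.
exists (SigSub (mem_set Ap)); split => // B U FB.
rewrite nbhsE => -[_ [[W oW <-] Wp] WU].
have FB' : F (set_val @^-1` (set_val @` B)).
  by apply: filterS FB => b Bb; exists b.
have [_ [[b Bb <-] Wb]] := clp _ _ FB' (open_nbhs_nbhs (conj oW Wp)).
by exists b; split => //; exact: WU.
Qed.

Lemma closed_set_val_image {H : set A} :
  closed A -> closed H -> closed (set_val @` H).
Proof.
move=> clA /closed_openC [W oW WH].
suff -> : set_val @` H = A `&` ~` W.
  by apply: closedI => //; exact: open_closedC.
apply/seteqP; split=> [_ [a Ha <-]|x [Ax nWx]].
  split; first exact: set_valP.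
  by move=> Wa; suff : (~` H) a by []; rewrite -WH.
exists (SigSub (mem_set Ax)) => //; apply: contrapT => nH; apply: nWx.
by have : (~` H) (SigSub (mem_set Ax)) by []; rewrite -WH.
Qed.

End SetType.

Section InjectiveContinuous.
Context {X Y : topologicalType} {f : X -> Y}.
Hypotheses (f_inj : injective f) (f_cont : continuous f).

Lemma hausdorff_inj_continuous : hausdorff_space Y -> hausdorff_space X.
Proof.
move=> T2Y p q clpq; apply: f_inj; apply: T2Y => U V /f_cont Up /f_cont Vq.
by have [z [Uz Vz]] := clpq _ _ Up Vq; exists (f z).
Qed.

Lemma totally_disconnected_inj_continuous :
  totally_disconnected [set: Y] -> totally_disconnected [set: X].
Proof.
move=> tdY x _; apply/seteqP; split=> [z [C [Cx _ ctC] Cz]|_ ->]; last first.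
  exact: connected_component_refl.
have ctfC : connected (f @` C).
  by apply: connected_continuous_connected ctC _; exact: continuous_subspaceT.
have : connected_component [set: Y] (f x) (f z).
  by exists (f @` C); [split => //; exists x|exists z].
by rewrite (tdY _ I) => /f_inj.
Qed.

End InjectiveContinuous.

Definition box {I : Type} {G : I -> Type} (K : forall i, set (G i)) :
  set (prod_topology G) := [set x | forall i, K i (x i)].

Section ProductGroup.
Context {I : Type} {G : I -> topologicalType}.
Context {mul : forall i, G i -> G i -> G i} {inv : forall i, G i -> G i}.
Context {one : forall i, G i}.
Local Notation pmul := (fun x y i => mul i (x i) (y i)).
Local Notation pinv := (fun x i => inv i (x i)).

Lemma continuous_proj i : continuous (fun x : prod_topology G => x i).
Proof. exact: (@proj_continuous {classic I} G i). Qed.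

Lemma topological_group_prod :
  (forall i, topological_group (mul i) (inv i) (one i)) ->
  topological_group (T := prod_topology G) pmul pinv one.
Proof.
move=> Gtop; split.
- by move=> x y z; apply: functional_extensionality_dep => i; case: (Gtop i).
- by move=> x; apply: functional_extensionality_dep => i; case: (Gtop i).
- by move=> x; apply: functional_extensionality_dep => i; case: (Gtop i).
- apply: continuous_prod_topology => i; case: (Gtop i) => _ _ _ cmul _.
  apply: continuous_comp2 cmul _ _ => p.
    exact: continuous_comp (fst_continuous p) (continuous_proj i p.1).
  exact: continuous_comp (snd_continuous p) (continuous_proj i p.2).
- apply: continuous_prod_topology => i x; case: (Gtop i) => _ _ _ _ cinv.
  exact: continuous_comp (continuous_proj i x) (cinv (x i)).
Qed.

Lemma profinite_group_prod :
  (forall i, profinite_group (mul i) (inv i) (one i)) ->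
  profinite_group (T := prod_topology G) pmul pinv one.
Proof.
move=> Gpf; split.
- by apply: topological_group_prod => i; case: (Gpf i).
- have Gcpt i : compact [set: G i] by case: (Gpf i).
  by have := @tychonoff {classic I} G _ Gcpt; congr compact; apply/seteqP.
- by apply: (@hausdorff_product {classic I}) => i; case: (Gpf i).
- have Gtd i : totally_disconnected [set: G i] by case: (Gpf i).
  have := @totally_disconnected_prod {classic I} G _ Gtd.
  by congr totally_disconnected; apply/seteqP.
Qed.

Lemma is_subgroup_box (K : forall i, set (G i)) :
  (forall i, is_subgroup (mul i) (inv i) (one i) (K i)) ->
  is_subgroup pmul pinv one (box K).
Proof.
move=> Ksub; split=> [i|x y Kx Ky i|x Kx i]; case: (Ksub i) => //.
- by move=> _ KM _; exact: KM.
- by move=> _ _ KV; exact: KV.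
Qed.

Lemma closed_box (K : forall i, set (G i)) :
  (forall i, closed (K i)) -> closed (box K).
Proof.
move=> Kcl.
suff -> : box K = \bigcap_i (fun x : prod_topology G => x i) @^-1` K i.
  apply: closed_bigI => i _; apply: preimage_closed => // x _.
  exact: continuous_proj.
by apply/seteqP; split=> [x Kx i _|x Kx i]; apply: Kx.
Qed.

End ProductGroup.

Section WellOrder.
Context {I : eqType} {R : rel I}.
Hypothesis R_wo : well_order R.

Lemma well_order_min {A : set I} :
  A !=set0 -> exists2 m, A m & forall x, A x -> R m x.
Proof.
case=> x Ax; have A_ne : nonempty (fun z => `[< A z >]).
  by exists x; rewrite unfold_in; exact/asboolP.
have [m [[Am m_lb] _]] := R_wo _ A_ne.
move: Am; rewrite unfold_in => /asboolP Am; exists m => // y Ay.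
by apply: m_lb; rewrite unfold_in; exact/asboolP.
Qed.

Lemma well_order_anti {x y : I} : R x y -> R y x -> x = y.
Proof.
move=> Rxy Ryx; apply: (@wo_chain_antisymmetric _ R predT); rewrite ?Rxy //.
exact: withinW.
Qed.

End WellOrder.

Section ProductComplement.
Context {I : choiceType} {G : I -> topologicalType}.
Context {mul : forall i, G i -> G i -> G i} {inv : forall i, G i -> G i}.
Context {one : forall i, G i}.
Hypothesis G_profinite : forall i, profinite_group (mul i) (inv i) (one i).
Local Notation pmul := (fun x y i => mul i (x i) (y i)).
Local Notation pinv := (fun x i => inv i (x i)).

Let mulA i : associative (mul i).
Proof. by case: (G_profinite i) => [[]]. Qed.
Let mul1g i : left_id (one i) (mul i).
Proof. by case: (G_profinite i) => [[]]. Qed.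
Let mulVg i : left_inverse (one i) (inv i) (mul i).
Proof. by case: (G_profinite i) => [[]]. Qed.
Let continuous_mul i : continuous (fun p : G i * G i => mul i p.1 p.2).
Proof. by case: (G_profinite i) => [[]]. Qed.
Let continuous_inv i : continuous (inv i).
Proof. by case: (G_profinite i) => [[]]. Qed.
Let compact_prod : compact [set: prod_topology G].
Proof. by case: (profinite_group_prod G_profinite). Qed.

Definition supported_on (A : set I) : set (prod_topology G) :=
  [set x | forall j, ~ A j -> x j = one j].

Lemma supported_on_subset A B : A `<=` B -> supported_on A `<=` supported_on B.
Proof. by move=> AB x xA j nBj; apply: xA => /AB. Qed.

Lemma is_subgroup_supported_on A : is_subgroup pmul pinv one (supported_on A).
Proof.
split=> [//|x y xA yA j nAj|x xA j nAj]; first by rewrite xA // yA // mul1g.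
by rewrite xA // (grp_invg1 (mulA j) (mul1g j) (mulVg j)).
Qed.

Lemma closed_supported_on A : closed (supported_on A).
Proof.
suff -> : supported_on A =
    \bigcap_(j in ~` A) (fun x : prod_topology G => x j) @^-1` [set one j].
  apply: closed_bigI => j _; apply: preimage_closed => [x _|].
    exact: continuous_proj.
  by apply/accessible_closed_set1/hausdorff_accessible; case: (G_profinite j).
by apply/seteqP; split=> x xA j; apply: xA.
Qed.

Variables (R : rel I) (H : set (prod_topology G)).
Hypotheses (R_wo : well_order R) (H_subgroup : is_subgroup pmul pinv one H).
Hypothesis H_closed : closed H.

Definition leading_coords i : set (G i) :=
  (fun x : prod_topology G => x i) @` (H `&` supported_on [set j | R i j]).

Lemma is_subgroup_leading_coords i :
  is_subgroup (mul i) (inv i) (one i) (leading_coords i).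
Proof.
have := is_subgroupI H_subgroup (is_subgroup_supported_on [set j | R i j]).
exact: is_subgroup_image.
Qed.

Lemma closed_leading_coords i : closed (leading_coords i).
Proof.
apply: compact_closed; first by case: (G_profinite i).
apply: continuous_compact; first exact/continuous_subspaceT/continuous_proj.
apply: (subclosed_compact _ compact_prod) => //.
by apply: closedI => //; exact: closed_supported_on.
Qed.

Variable K : forall i, set (G i).
Hypotheses (K_closed : forall i, closed (K i))
  (K_complement : forall i,
     permutable_complement (mul i) (one i) (leading_coords i) (K i)).

Lemma box_setI_trivial : H `&` box K = [set one].
Proof.
apply/seteqP; split=> [x [Hx Kx]|_ ->]; last first.
  split=> [|i]; first by case: H_subgroup.
  by have [] : (leading_coords i `&` K i) (one i) by rewrite (K_complement i).2.
apply: functional_extensionality_dep => i; apply: contrapT => xi.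
have [m xm m_min] :=
  well_order_min R_wo (ex_intro (fun j => x j <> one j) i xi).
suff : (leading_coords m `&` K m) (x m).
  by rewrite (K_complement m).2; exact: xm.
split=> //; exists x => //; split=> // j nRmj.
by apply: contrapT => xj; exact: nRmj (m_min j xj).
Qed.

(* Induction on s, removing its least index m: coordinate m is corrected by an
   element of H trivial below m, and the support condition makes the
   corrections for the other indices of s trivial at m. *)
Lemma box_decomposition_on (s : seq I) g : exists h, [/\ H h,
  supported_on [set j | exists2 i, i \in s & R i j] h &
  forall i, i \in s -> K i (mul i (inv i (h i)) (g i))].
Proof.
have [n] := ubnP (size s); elim: n => // n IHn in s g *; rewrite ltnS => s_n.
have [->|[i0 s_i0]] : s = [::] \/ exists i, i \in s.
  by case: s {s_n} => [|i s]; [left|right; exists i; exact: mem_head].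
  by exists one; split=> //; case: H_subgroup.
have [m s_m m_min] :=
  well_order_min R_wo (ex_intro (fun i => i \in s) i0 s_i0).
have [_ [k [[y [Hy y_supp] <-] Kk gm]]] := (K_complement m).1 (g m).
pose t := [seq i <- s | i != m].
have t_n : size t < n.
  apply: leq_trans s_n; rewrite size_filter -(count_predC (pred1 m)) addnC.
  by rewrite -addn1 leq_add2l -has_count has_pred1.
have [h [Hh h_supp hK]] := IHn t (fun i => mul i (inv i (y i)) (g i)) t_n.
exists (pmul y h); split.
- by case: H_subgroup => _ HM _; exact: HM.
- have [_ SM _] :=
    is_subgroup_supported_on [set j | exists2 i, i \in s & R i j].
  apply: SM; first by apply: supported_on_subset y_supp => j Rmj; exists m.
  apply: supported_on_subset h_supp => j [i].
  by rewrite mem_filter => /andP[_ s_i]; exists i.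
move=> i s_i; rewrite (grp_invMg (mulA i) (mul1g i) (mulVg i)) -mulA.
have [->|im] := eqVneq i m; last by apply: hK; rewrite mem_filter im.
suff -> : h m = one m.
  by rewrite (grp_invg1 (mulA m) (mul1g m) (mulVg m)) mul1g gm
     (grp_mulKg (mulA m) (mul1g m) (mulVg m)).
apply: h_supp => -[j]; rewrite mem_filter => /andP[jm s_j] Rjm.
by rewrite (well_order_anti R_wo (m_min j s_j) Rjm) eqxx in jm.
Qed.

Lemma box_decomposition g : exists h k, [/\ H h, box K k & g = pmul h k].
Proof.
suff [h Hh hK] : exists2 h, H h & forall i, K i (mul i (inv i (h i)) (g i)).
  exists h, (fun i => mul i (inv i (h i)) (g i)); split => //.
  by apply: functional_extensionality_dep => i /=;
    rewrite (grp_mulKVg (mulA i) (mul1g i) (mulVg i)).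
apply: compact_finite_intersection.
- exact: subclosed_compact H_closed compact_prod _.
- move=> i; have cinv : continuous (fun x : prod_topology G => inv i (x i)).
    move=> y.
    exact: continuous_comp (continuous_proj i y) (continuous_inv i (y i)).
  have cf :=
    continuous_comp2 (continuous_mul i) cinv (cst_continuous (x := g i)).
  by apply: preimage_closed => [x _|]; [exact: cf|exact: K_closed].
- by move=> s; have [h [Hh _ hK]] := box_decomposition_on s g; exists h.
Qed.

End ProductComplement.

Lemma profinite_C_prod {I : Type} {G : I -> topologicalType}
    {mul : forall i, G i -> G i -> G i} {inv : forall i, G i -> G i}
    {one : forall i, G i} :
  (forall i, profinite_C (mul i) (inv i) (one i)) ->
  profinite_C (T := prod_topology G)
    (fun x y i => mul i (x i) (y i)) (fun x i => inv i (x i)) one.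
Proof.
elim/Pchoice: I => I in G mul inv one *.
move=> G_C; have G_pf i := (G_C i).1.
split=> [|H H_sub H_cl]; first exact: profinite_group_prod.
have [R R_wo] := well_ordering_principle I.
have [K /all_and3[K_sub K_cl K_compl]] := all_sig (fun i => cid ((G_C i).2 _
  (is_subgroup_leading_coords G_pf R H H_sub i)
  (closed_leading_coords G_pf R H H_cl i))).
exists (box K); split; [exact: is_subgroup_box|exact: closed_box|split].
- exact: (box_decomposition G_pf R H R_wo H_sub H_cl K K_cl K_compl).
- exact: (box_setI_trivial R H R_wo H_sub K K_compl).
Qed.

Section ClosedSubgroup.
Context {T : topologicalType} {mul : T -> T -> T} {inv : T -> T} {one : T}.
Context {L : set T} {lmul : L -> L -> L} {linv : L -> L} {lone : L}.
Hypotheses (lmulE : {morph set_val : x y / lmul x y >-> mul x y})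
  (linvE : {morph set_val : x / linv x >-> inv x}) (loneE : set_val lone = one).

Lemma topological_group_set_type :
  topological_group mul inv one -> topological_group lmul linv lone.
Proof.
case=> mulA mul1g mulVg cmul cinv; split.
- by move=> x y z; apply: set_val_inj; rewrite !lmulE mulA.
- by move=> x; apply: set_val_inj; rewrite lmulE loneE mul1g.
- by move=> x; apply: set_val_inj; rewrite lmulE linvE loneE mulVg.
- apply: (@continuous_comp_initial _ _ _ (@set_val T L)).
  have -> : set_val \o (fun p : L * L => lmul p.1 p.2) =
      (fun p => mul (set_val p.1) (set_val p.2)).
    by apply: funext => p /=; rewrite lmulE.
  apply: continuous_comp2 cmul _ _ => p.
    exact: continuous_comp (fst_continuous p) (continuous_set_val p.1).
  exact: continuous_comp (snd_continuous p) (continuous_set_val p.2).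
- apply: (@continuous_comp_initial _ _ _ (@set_val T L)).
  have -> : set_val \o linv = (fun x => inv (set_val x)).
    by apply: funext => x /=; rewrite linvE.
  by move=> x; exact: continuous_comp (continuous_set_val x) (cinv _).
Qed.

Lemma profinite_group_closed_subgroup :
  closed L -> profinite_group mul inv one -> profinite_group lmul linv lone.
Proof.
move=> L_cl [Ttop Tcpt T2 Ttd]; split.
- exact: topological_group_set_type.
- by apply: compact_set_type; exact: subclosed_compact L_cl Tcpt _.
- exact: hausdorff_inj_continuous set_val_inj continuous_set_val T2.
- exact: totally_disconnected_inj_continuous set_val_inj continuous_set_val Ttd.
Qed.

Lemma permutable_complement_set_type (H : set L) (K : set T) :
  associative mul -> left_id one mul -> left_inverse one inv mul ->
  permutable_complement mul one (set_val @` H) K ->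
  permutable_complement lmul lone H (set_val @^-1` K).
Proof.
move=> mulA mul1g mulVg [decomp HK1]; split=> [g|].
  have [_ [k [[h Hh <-] Kk gE]]] := decomp (set_val g).
  exists h, (lmul (linv h) g); split => //.
    by rewrite /preimage /= lmulE linvE gE (grp_mulKg mulA mul1g mulVg).
  by apply: set_val_inj; rewrite !lmulE linvE (grp_mulKVg mulA mul1g mulVg).
have [[x Hx xE] K1] : (set_val @` H `&` K) one by rewrite HK1.
have x1 : x = lone by apply: set_val_inj; rewrite xE loneE.
apply/seteqP; split=> [y [Hy Ky]|_ ->].
  apply: set_val_inj; rewrite loneE.
  suff : (set_val @` H `&` K) (set_val y) by rewrite HK1.
  by split => //; exists y.
by rewrite -x1; split; rewrite // /preimage /= xE.
Qed.


Lemma profinite_C_closed_subgroup :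
  closed L -> profinite_C mul inv one -> profinite_C lmul linv lone.
Proof.
move=> L_cl [T_pf T_C]; have [[mulA mul1g mulVg _ _] _ _ _] := T_pf.
split=> [|H H_sub H_cl]; first exact: profinite_group_closed_subgroup.
have [K [K_sub K_cl K_compl]] :=
  T_C _ (is_subgroup_image lmulE linvE loneE H_sub)
    (closed_set_val_image L_cl H_cl).
exists (set_val @^-1` K); split.
- exact: (is_subgroup_preimage lmulE linvE loneE K_sub).
- by apply: preimage_closed K_cl => x _; exact: continuous_set_val.
- exact: permutable_complement_set_type.
Qed.

End ClosedSubgroup.

Section InverseLimit.
Context {d : Order.disp_t} {I : porderType d} {G : I -> topologicalType}.
Context {mul : forall i, G i -> G i -> G i} {inv : forall i, G i -> G i}.
Context {one : forall i, G i} {f : forall i j : I, (i <= j)%O -> G j -> G i}.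

Lemma is_subgroup_inv_limit :
  (forall i, associative (mul i)) -> (forall i, left_id (one i) (mul i)) ->
  (forall i, left_inverse (one i) (inv i) (mul i)) ->
  (forall i j (hij : (i <= j)%O),
     {morph f i j hij : x y / mul j x y >-> mul i x y}) ->
  is_subgroup (fun x y i => mul i (x i) (y i)) (fun x i => inv i (x i)) one
    (inv_limit f).
Proof.
move=> mulA mul1g mulVg fM.
split=> [i j hij|x y x_lim y_lim i j hij|x x_lim i j hij] /=.
- by apply: (grp_morph1 (mul1g j) (mulA i) (mul1g i) (mulVg i) (fM i j hij)).
- by rewrite fM x_lim y_lim.
- have fV := grp_morphV (mulA j) (mul1g j) (mulVg j) (mulA i) (mul1g i)
    (mulVg i) (fM i j hij).
  by rewrite fV x_lim.
Qed.

Lemma closed_inv_limit :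
  (forall i, hausdorff_space (G i)) ->
  (forall i j (hij : (i <= j)%O), continuous (f i j hij)) ->
  closed (inv_limit f).
Proof.
move=> T2 f_cont; suff -> : inv_limit f = \bigcap_i \bigcap_j \bigcap_hij
    [set x : prod_topology G | f i j hij (x j) = x i].
  apply: closed_bigI => i _; apply: closed_bigI => j _.
  apply: closed_bigI => hij _; apply: closed_equalizer => //.
    move=> x.
    exact: continuous_comp (continuous_proj j x) (f_cont i j hij (x j)).
  exact: continuous_proj.
apply/seteqP; split=> [x x_lim i _ j _ hij _|x x_lim i j hij].
  exact: x_lim.
by apply: (x_lim i _ j _ hij).
Qed.

End InverseLimit.

Theorem theorem2p4 :
  (* (1) the cartesian product of profinite-C groups is profinite-C *)
  (forall (I : Type) (G : I -> topologicalType)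
     (mul : forall i, G i -> G i -> G i) (inv : forall i, G i -> G i)
     (one : forall i, G i),
     (forall i, profinite_C (mul i) (inv i) (one i)) ->
     profinite_C (T := prod_topology G)
       (fun x y i => mul i (x i) (y i)) (fun x i => inv i (x i)) one) /\
  (* (2) the inverse limit of an inverse system of profinite-C groups with
     continuous homomorphisms is profinite-C (with the induced group law and
     the subspace topology) *)
  (forall (d : Order.disp_t) (I : porderType d) (G : I -> topologicalType)
     (mul : forall i, G i -> G i -> G i) (inv : forall i, G i -> G i)
     (one : forall i, G i)
     (f : forall i j : I, (i <= j)%O -> G j -> G i),
     (forall i, profinite_C (mul i) (inv i) (one i)) ->
     (forall i j (hij : (i <= j)%O), continuous (f i j hij)) ->
     (forall i j (hij : (i <= j)%O) x y,
         f i j hij (mul j x y) = mul i (f i j hij x) (f i j hij y)) ->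
     (forall i (hii : (i <= i)%O) x, f i i hii x = x) ->
     (forall i j k (hij : (i <= j)%O) (hjk : (j <= k)%O) (hik : (i <= k)%O) x,
         f i k hik x = f i j hij (f j k hjk x)) ->
     exists (lmul : inv_limit f -> inv_limit f -> inv_limit f)
            (linv : inv_limit f -> inv_limit f) (lone : inv_limit f),
       [/\ (forall x y, set_val (lmul x y) = (fun i => mul i (set_val x i) (set_val y i))),
           (forall x, set_val (linv x) = (fun i => inv i (set_val x i))),
           set_val lone = one &
           profinite_C lmul linv lone]).
Proof.
split=> [I G mul inv one|d I G mul inv one f G_C f_cont fM _ _].
  exact: profinite_C_prod.
have G_pf i := (G_C i).1.
have mulA i : associative (mul i) by case: (G_pf i) => [[]].
have mul1g i : left_id (one i) (mul i) by case: (G_pf i) => [[]].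
have mulVg i : left_inverse (one i) (inv i) (mul i) by case: (G_pf i) => [[]].
have T2 i : hausdorff_space (G i) by case: (G_pf i).
have [lim1 limM limV] := is_subgroup_inv_limit mulA mul1g mulVg fM.
pose lmul (x y : inv_limit f) : inv_limit f :=
  SigSub (mem_set (limM _ _ (set_valP x) (set_valP y))).
pose linv (x : inv_limit f) : inv_limit f :=
  SigSub (mem_set (limV _ (set_valP x))).
pose lone : inv_limit f := SigSub (mem_set lim1).
exists lmul, linv, lone; split => //.
by apply: (profinite_C_closed_subgroup _ _ _ (closed_inv_limit T2 f_cont)
  (profinite_C_prod G_C)).
Qed.
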